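(* For all positive integers $n$ and $k$, \[ 0\le\frac1{n^k}-\frac1{n(n+1)\cdots(n+k-1)}<\frac{k^2}{2n^{k+1}}. \] *)

From Stdlib Require Import Reals.
Open Scope R_scope.

Fixpoint rising (n k : nat) : R :=
  match k with
  | O => 1
  | S k' => rising n k' * INR (n + k')
  end.

(** Write [N = n^k] and [r = n(n+1)...(n+k-1)].  Passing from [k] to [k+1]
    multiplies [r] by [n+k] and [N] by [n], so the gap [r - N] grows by
    [n (r - N) + k r]; induction gives [2 n (r - N) <= k (k-1) r].  Hence
    [1/N - 1/r = (r - N)/(N r) <= k (k-1) / (2 n N) < k^2 / (2 n^(k+1))]. *)

From Stdlib Require Import Reals Lra Lia Psatz.
Open Scope R_scope.

Lemma rising_ge0 (n k : nat) : 0 <= rising n k.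
Proof.
  induction k as [|k IH]; simpl; [lra|].
  apply Rmult_le_pos; [exact IH | apply pos_INR].
Qed.

Lemma pow_le_rising (n k : nat) : INR n ^ k <= rising n k.
Proof.
  induction k as [|k IH]; simpl; [lra|].
  rewrite plus_INR, Rmult_comm.
  pose proof (pos_INR n); pose proof (pos_INR k).
  apply Rmult_le_compat; try lra.
  apply pow_le; lra.
Qed.

Lemma rising_sub_pow_le (n k : nat) :
  2 * INR n * (rising n k - INR n ^ k) <= INR k * (INR k - 1) * rising n k.
Proof.
  induction k as [|k IH]; [simpl; lra|].
  simpl rising; simpl pow; rewrite S_INR, plus_INR.
  pose proof (rising_ge0 n k) as Hr; pose proof (pos_INR n); pose proof (pos_INR k).
  set (r := rising n k) in *; set (N := INR n ^ k) in *.
  assert (Hscaled : INR n * (2 * INR n * (r - N)) <= INR n * (INR k * (INR k - 1) * r))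
    by (apply Rmult_le_compat_l; lra).
  assert (Hextra : 0 <= INR k * (INR k + 1) * r * INR k)
    by (repeat apply Rmult_le_pos; lra).
  nra.
Qed.

Theorem lemma3p8 (n k : nat) (hn : (1 <= n)%nat) (hk : (1 <= k)%nat) :
  0 <= 1 / INR n ^ k - 1 / rising n k /\
  1 / INR n ^ k - 1 / rising n k < INR k ^ 2 / (2 * INR n ^ (k + 1)).
Proof.
  assert (Hn : 1 <= INR n) by (apply (le_INR 1); lia).
  assert (Hk : 1 <= INR k) by (apply (le_INR 1); lia).
  pose proof (pow_le_rising n k) as Hle.
  pose proof (rising_sub_pow_le n k) as Hgap.
  assert (HN : 0 < INR n ^ k) by (apply pow_lt; lra).
  rewrite pow_add, pow_1.
  set (N := INR n ^ k) in *; set (r := rising n k) in *.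
  assert (Hr : 0 < r) by lra.
  assert (Hdiff : 1 / N - 1 / r = (r - N) / (N * r)) by (field; lra).
  assert (Hmargin : INR k ^ 2 / (2 * (N * INR n)) - (r - N) / (N * r)
                    = (INR k ^ 2 * r - 2 * INR n * (r - N)) / (2 * N * INR n * r))
    by (field; lra).
  rewrite Hdiff; split.
  - unfold Rdiv; apply Rmult_le_pos; [lra|].
    left; apply Rinv_0_lt_compat, Rmult_lt_0_compat; lra.
  - apply Rlt_0_minus; rewrite Hmargin.
    apply Rdiv_lt_0_compat; [nra|].
    repeat apply Rmult_lt_0_compat; lra.
Qed.
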